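(* Let $\mathcal{A}$ be an arrangement of distinct lines in $\mathbb{P}^2_{\mathbb{C}}$. If $\mathcal{R}(I(\mathcal{A}))$ is disconnected (in the classical topology), then there exists a nonempty subarrangement $\mathcal{A}'\subset\mathcal{A}$ such that $|\operatorname{mult}(\mathcal{A}')\cap H|\ge 3$ for all $H\in\mathcal{A}'$.
   Context: $\operatorname{mult}(\mathcal{B})$ is the set of points of $\mathbb{P}^2$ lying on at least three lines of the arrangement $\mathcal{B}$. Lines are identified with points of $(\mathbb{P}^2)^*$ via their coefficients; $I(\mathcal{A})$ is the set of triples $\{i,j,k\}$ with $H_i\cap H_j\cap H_k\neq\emptyset$; $\mathcal{R}(I)=\{(H_1,\dots,H_n)\in((\mathbb{P}^2)^* )^n: H_i\ne H_j\ (i\ne j),\ \det(H_i,H_j,H_k)=0 \text{ iff } \{i,j,k\}\in I\}$, where $\det$ is the determinant of the coefficient rows. *)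

From Stdlib Require Import Reals.
Open Scope R_scope.

Definition C := (R * R)%type.
Definition C0 : C := (0, 0).
Definition Cadd (x y : C) : C := (fst x + fst y, snd x + snd y).
Definition Csub (x y : C) : C := (fst x - fst y, snd x - snd y).
Definition Cmul (x y : C) : C :=
  (fst x * fst y - snd x * snd y, fst x * snd y + snd x * fst y).

(* ---------- vectors of C^3 (coefficients of lines / coordinates of points) *)
Record vec3 := mkV { v0 : C; v1 : C; v2 : C }.

Definition vnz (v : vec3) : Prop := ~ (v0 v = C0 /\ v1 v = C0 /\ v2 v = C0).
Definition vscale (c : C) (v : vec3) : vec3 :=
  mkV (Cmul c (v0 v)) (Cmul c (v1 v)) (Cmul c (v2 v)).

(* u and v represent the same point of P^2 (resp. (P^2)^* ) *)
Definition same_point (u v : vec3) : Prop :=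
  exists c : C, c <> C0 /\ v = vscale c u.

Definition dot (u v : vec3) : C :=
  Cadd (Cadd (Cmul (v0 u) (v0 v)) (Cmul (v1 u) (v1 v))) (Cmul (v2 u) (v2 v)).
Definition on_line (p h : vec3) : Prop := dot p h = C0.

Definition det3 (u v w : vec3) : C :=
  Cadd (Csub (Cmul (v0 u) (Csub (Cmul (v1 v) (v2 w)) (Cmul (v2 v) (v1 w))))
             (Cmul (v1 u) (Csub (Cmul (v0 v) (v2 w)) (Cmul (v2 v) (v0 w)))))
       (Cmul (v2 u) (Csub (Cmul (v0 v) (v1 w)) (Cmul (v1 v) (v0 w)))).

(* ---------- arrangements: n lines H_0..H_{n-1}, given by representatives *)
Definition Config := nat -> vec3.

Definition is_arrangement (n : nat) (A : Config) : Prop :=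
  (forall i, (i < n)%nat -> vnz (A i)) /\
  (forall i j, (i < n)%nat -> (j < n)%nat -> i <> j -> ~ same_point (A i) (A j)).

Definition TripleSet := nat -> nat -> nat -> Prop.

Definition I_of (A : Config) : TripleSet :=
  fun i j k => exists p, vnz p /\ on_line p (A i) /\ on_line p (A j) /\ on_line p (A k).

(* R(I), as the (saturated) set of representatives in (C^3 \ 0)^n *)
Definition realization_space (n : nat) (I : TripleSet) (G : Config) : Prop :=
  (forall i, (i < n)%nat -> vnz (G i)) /\
  (forall i j, (i < n)%nat -> (j < n)%nat -> i <> j -> ~ same_point (G i) (G j)) /\
  (forall i j k, (i < n)%nat -> (j < n)%nat -> (k < n)%nat ->
     i <> j -> j <> k -> i <> k ->
     (det3 (G i) (G j) (G k) = C0 <-> I i j k)).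

(* ---------- classical topology on ((P^2)^* )^n, as a quotient topology *)
Definition Cclose (eps : R) (x y : C) : Prop :=
  Rabs (fst x - fst y) < eps /\ Rabs (snd x - snd y) < eps.
Definition vclose (eps : R) (u v : vec3) : Prop :=
  Cclose eps (v0 u) (v0 v) /\ Cclose eps (v1 u) (v1 v) /\ Cclose eps (v2 u) (v2 v).
Definition cfg_close (n : nat) (eps : R) (x y : Config) : Prop :=
  forall i, (i < n)%nat -> vclose eps (x i) (y i).

Definition cfg_open (n : nat) (U : Config -> Prop) : Prop :=
  forall x, U x -> exists eps, 0 < eps /\ forall y, cfg_close n eps x y -> U y.

(* invariant under rescaling each coordinate vector by a nonzero scalar,
   i.e. U is the preimage of a subset of ((P^2)^* )^n *)
Definition saturated (n : nat) (U : Config -> Prop) : Prop :=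
  forall (x : Config) (c : nat -> C), (forall i, (i < n)%nat -> c i <> C0) ->
    (U x <-> U (fun i => vscale (c i) (x i))).

(* S (a saturated set, i.e. a subset of ((P^2)^* )^n) is disconnected in the
   quotient (classical) topology *)
Definition disconnected (n : nat) (S : Config -> Prop) : Prop :=
  exists U V : Config -> Prop,
    cfg_open n U /\ cfg_open n V /\ saturated n U /\ saturated n V /\
    (forall x, S x -> U x \/ V x) /\
    (forall x, S x -> U x -> V x -> False) /\
    (exists x, S x /\ U x) /\ (exists x, S x /\ V x).

Definition in_mult (A : Config) (J : nat -> Prop) (p : vec3) : Prop :=
  vnz p /\ exists i j k, J i /\ J j /\ J k /\ i <> j /\ j <> k /\ i <> k /\
    on_line p (A i) /\ on_line p (A j) /\ on_line p (A k).

(* Suppose every nonempty subarrangement has a line carrying at most two of its multiple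
   points.  Removing such lines one at a time and reversing the order, every realization of
   I(A) is obtained by choosing the lines one after the other: a line through no earlier
   intersection point is arbitrary, a line through one such point is an arbitrary line of the
   pencil through it, and a line through two is the line joining them.  Up to rescaling the
   lines, this parametrizes the realizations polynomially by a complex vector space.  On the
   complex line through the parameters of two realizations, the open conditions defining R(I)
   fail only at the zeros of finitely many polynomials that do not vanish at the first
   parameter, so a real arc joining the two parameters and avoiding these zeros gives a path
   in R(I) between the two realizations: R(I) is connected. *)

From Stdlib Require Import Reals Lra Lia Field Classical ClassicalEpsilon FunctionalExtensionality List.
Open Scope R_scope.

Definition C1 : C := (1, 0).
Definition Copp (x : C) : C := (- fst x, - snd x).
Definition Cinv (x : C) : C :=
  (fst x / (fst x * fst x + snd x * snd x), - snd x / (fst x * fst x + snd x * snd x)).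
Definition Cdiv (x y : C) : C := Cmul x (Cinv y).

Lemma C_ext (x y : C) : fst x = fst y -> snd x = snd y -> x = y.
Proof. destruct x, y; simpl; intros; subst; reflexivity. Qed.

Lemma C_ring : ring_theory C0 C1 Cadd Cmul Csub Copp (@eq C).
Proof.
  constructor; intros; apply C_ext; unfold Cadd, Cmul, Csub, Copp, C0, C1; simpl; ring.
Qed.

Lemma C1_neq_C0 : C1 <> C0.
Proof. unfold C1, C0; intro H; injection H; lra. Qed.

Lemma Cnorm2_neq0 (x : C) : x <> C0 -> fst x * fst x + snd x * snd x <> 0.
Proof.
  destruct x as [a b]; simpl; intros H E; apply H.
  assert (a = 0) by nra; assert (b = 0) by nra; subst; reflexivity.
Qed.

Lemma C_field : field_theory C0 C1 Cadd Cmul Csub Copp Cdiv Cinv (@eq C).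
Proof.
  constructor.
  - exact C_ring.
  - exact C1_neq_C0.
  - reflexivity.
  - intros [a b] Hp; pose proof (Cnorm2_neq0 (a, b) Hp).
    apply C_ext; unfold Cmul, Cinv, C1; simpl in *; field; assumption.
Qed.

Add Field C_field_inst : C_field.

Lemma Cmul_integral (x y : C) : Cmul x y = C0 -> x = C0 \/ y = C0.
Proof.
  intro H; destruct (classic (x = C0)) as [Hx | Hx]; [left; exact Hx | right].
  transitivity (Cmul (Cinv x) (Cmul x y)); [field; exact Hx |].
  rewrite H; ring.
Qed.

Lemma Cmul_neq0 (x y : C) : x <> C0 -> y <> C0 -> Cmul x y <> C0.
Proof. intros Hx Hy H; destruct (Cmul_integral _ _ H); auto. Qed.

Lemma Cmul_cancel_l (a x y z : C) : a <> C0 -> Cmul a x = Cmul y z -> x = Cmul (Cdiv y a) z.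
Proof.
  intros Ha E; transitivity (Cdiv (Cmul a x) a); [field; exact Ha |].
  rewrite E; field; exact Ha.
Qed.

Definition vzero : vec3 := mkV C0 C0 C0.
Definition vadd (u v : vec3) : vec3 :=
  mkV (Cadd (v0 u) (v0 v)) (Cadd (v1 u) (v1 v)) (Cadd (v2 u) (v2 v)).
Definition vsub (u v : vec3) : vec3 :=
  mkV (Csub (v0 u) (v0 v)) (Csub (v1 u) (v1 v)) (Csub (v2 u) (v2 v)).
Definition cross (u v : vec3) : vec3 :=
  mkV (Csub (Cmul (v1 u) (v2 v)) (Cmul (v2 u) (v1 v)))
      (Csub (Cmul (v2 u) (v0 v)) (Cmul (v0 u) (v2 v)))
      (Csub (Cmul (v0 u) (v1 v)) (Cmul (v1 u) (v0 v))).

Lemma V_ext (u v : vec3) : v0 u = v0 v -> v1 u = v1 v -> v2 u = v2 v -> u = v.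
Proof. destruct u, v; simpl; intros; subst; reflexivity. Qed.

Ltac vec_ring :=
  repeat match goal with v : vec3 |- _ => destruct v end;
  first [ apply V_ext | idtac ];
  unfold det3, dot, cross, vscale, vadd, vsub, vzero; simpl; ring.

Lemma dot_comm (u v : vec3) : dot u v = dot v u.
Proof. vec_ring. Qed.

Lemma dot_cross_l (u v : vec3) : dot (cross u v) u = C0.
Proof. vec_ring. Qed.

Lemma dot_cross_r (u v : vec3) : dot (cross u v) v = C0.
Proof. vec_ring. Qed.

Lemma dot_scale_r (c : C) (u v : vec3) : dot u (vscale c v) = Cmul c (dot u v).
Proof. vec_ring. Qed.

Lemma cross_scale (a b : C) (u v : vec3) :
  cross (vscale a u) (vscale b v) = vscale (Cmul a b) (cross u v).
Proof. vec_ring. Qed.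

Lemma cross_scale_r (c : C) (u v : vec3) : cross u (vscale c v) = vscale c (cross u v).
Proof. vec_ring. Qed.

Lemma cross_cross_l (u v w : vec3) :
  cross (cross u v) w = vsub (vscale (dot u w) v) (vscale (dot v w) u).
Proof. vec_ring. Qed.

Lemma cross_cross_r (p u v : vec3) :
  cross p (cross u v) = vsub (vscale (dot p v) u) (vscale (dot p u) v).
Proof. vec_ring. Qed.

Lemma det3_dot (u v w : vec3) : det3 u v w = dot u (cross v w).
Proof. vec_ring. Qed.

Lemma det3_dot_cross (u v w : vec3) : det3 u v w = dot w (cross u v).
Proof. vec_ring. Qed.

Lemma det3_rot (u v w : vec3) : det3 u v w = det3 v w u.
Proof. vec_ring. Qed.

Lemma det3_scale (a b c : C) (u v w : vec3) :
  det3 (vscale a u) (vscale b v) (vscale c w) = Cmul (Cmul (Cmul a b) c) (det3 u v w).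
Proof. vec_ring. Qed.

Lemma det3_uuw (u w : vec3) : det3 u u w = C0.
Proof. vec_ring. Qed.

Lemma det3_uvu (u v : vec3) : det3 u v u = C0.
Proof. vec_ring. Qed.

Lemma det3_uvv (u v : vec3) : det3 u v v = C0.
Proof. vec_ring. Qed.

Lemma det3_scale_expand (x y z P : vec3) :
  vscale (det3 x y z) P =
  vadd (vadd (vscale (dot x P) (cross y z)) (vscale (dot y P) (cross z x)))
       (vscale (dot z P) (cross x y)).
Proof. vec_ring. Qed.

Lemma Csub_eq0 (x y : C) : Csub x y = C0 -> x = y.
Proof. intro E; transitivity (Cadd (Csub x y) y); [ring | rewrite E; ring]. Qed.

Lemma vsub_eq0 (u v : vec3) : vsub u v = vzero -> u = v.
Proof.
  intro E; apply V_ext; apply Csub_eq0;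
    [ apply (f_equal v0) in E | apply (f_equal v1) in E | apply (f_equal v2) in E ]; exact E.
Qed.

Lemma vnz_cases (u : vec3) : vnz u -> v0 u <> C0 \/ v1 u <> C0 \/ v2 u <> C0.
Proof.
  unfold vnz; intro H.
  destruct (classic (v0 u = C0)), (classic (v1 u = C0)), (classic (v2 u = C0)); tauto.
Qed.

Lemma not_vnz (u : vec3) : ~ vnz u -> u = vzero.
Proof. intro H; apply NNPP in H; destruct H as [E0 [E1 E2]]; apply V_ext; assumption. Qed.

Lemma vnz_scale (c : C) (u : vec3) : c <> C0 -> vnz u -> vnz (vscale c u).
Proof.
  intros Hc Hu [E0 [E1 E2]]; apply Hu; simpl in *.
  destruct (Cmul_integral _ _ E0), (Cmul_integral _ _ E1), (Cmul_integral _ _ E2); tauto.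
Qed.

Lemma vscale_eq0 (c : C) (u : vec3) : vnz u -> vscale c u = vzero -> c = C0.
Proof.
  intros Hu E.
  destruct (vnz_cases u Hu) as [H | [H | H]];
    [ apply (f_equal v0) in E | apply (f_equal v1) in E | apply (f_equal v2) in E ];
    simpl in E; destruct (Cmul_integral _ _ E); tauto.
Qed.

Lemma dot_witness (u : vec3) : vnz u -> exists w, dot u w <> C0.
Proof.
  intro Hu; destruct (vnz_cases u Hu) as [H | [H | H]];
    [ exists (mkV C1 C0 C0) | exists (mkV C0 C1 C0) | exists (mkV C0 C0 C1) ];
    intro E; apply H; rewrite <- E; unfold dot; simpl; ring.
Qed.

Lemma det3_eq0_of_orth (P x y z : vec3) :
  vnz P -> dot x P = C0 -> dot y P = C0 -> dot z P = C0 -> det3 x y z = C0.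
Proof.
  intros HP Hx Hy Hz; apply (vscale_eq0 _ P HP).
  rewrite det3_scale_expand, Hx, Hy, Hz; vec_ring.
Qed.

Lemma cross_eq0_scale (u v w : vec3) :
  cross u v = vzero -> vscale (dot u w) v = vscale (dot v w) u.
Proof.
  intro E; apply vsub_eq0; rewrite <- cross_cross_l, E; vec_ring.
Qed.

Lemma same_of_cross (u v : vec3) : vnz u -> vnz v -> cross u v = vzero -> same_point u v.
Proof.
  intros Hu Hv E; destruct (dot_witness u Hu) as [w Hw].
  pose proof (cross_eq0_scale u v w E) as S.
  assert (Hc : forall c, v = vscale c u -> same_point u v).
  { intros c Ev; exists c; split; [| exact Ev].
    intro Hc0; apply Hv; rewrite Ev, Hc0; simpl; repeat split; ring. }
  apply (Hc (Cdiv (dot v w) (dot u w))); apply V_ext; simpl; apply Cmul_cancel_l; auto;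
    [ apply (f_equal v0) in S | apply (f_equal v1) in S | apply (f_equal v2) in S ]; exact S.
Qed.

Lemma cross_of_same (u v : vec3) : same_point u v -> cross u v = vzero.
Proof. intros [c [_ ->]]; vec_ring. Qed.

Lemma cross_vnz (u v : vec3) : vnz u -> vnz v -> ~ same_point u v -> vnz (cross u v).
Proof. intros Hu Hv Huv Hz; apply Huv, same_of_cross, not_vnz; auto. Qed.

Lemma same_point_sym (u v : vec3) : same_point u v -> same_point v u.
Proof.
  intros [c [Hc ->]]; exists (Cinv c); split.
  - intro H; apply C1_neq_C0; transitivity (Cmul (Cinv c) c); [field; exact Hc |].
    rewrite H; ring.
  - apply V_ext; simpl; field; exact Hc.
Qed.

Lemma same_point_trans (u v w : vec3) : same_point u v -> same_point v w -> same_point u w.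
Proof.
  intros [c [Hc ->]] [d [Hd ->]]; exists (Cmul d c); split.
  - apply Cmul_neq0; assumption.
  - vec_ring.
Qed.

Lemma on_line_same (p q h : vec3) : same_point p q -> on_line q h -> on_line p h.
Proof.
  intros [c [Hc ->]] Hq; unfold on_line in *.
  rewrite dot_comm, dot_scale_r, dot_comm in Hq.
  destruct (Cmul_integral _ _ Hq); tauto.
Qed.

Lemma cross_eq0_of_dot (p u v : vec3) :
  dot p u = C0 -> dot p v = C0 -> cross p (cross u v) = vzero.
Proof. intros Hu Hv; rewrite cross_cross_r, Hu, Hv; vec_ring. Qed.

Lemma same_point_of_on_lines (u v p q : vec3) :
  vnz u -> vnz v -> ~ same_point u v -> vnz p -> vnz q ->
  on_line p u -> on_line p v -> on_line q u -> on_line q v -> same_point p q.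
Proof.
  intros Hu Hv Huv Hp Hq Hpu Hpv Hqu Hqv.
  pose proof (cross_vnz u v Hu Hv Huv) as Huv'.
  apply same_point_trans with (cross u v); [| apply same_point_sym];
    apply same_of_cross, cross_eq0_of_dot; assumption.
Qed.

Lemma cross_surj (P h : vec3) : vnz P -> dot h P = C0 -> exists w, cross P w = h.
Proof.
  intros HP Hh; destruct (dot_witness P HP) as [w Hw].
  exists (vscale (Cinv (dot P w)) (cross h w)).
  rewrite cross_scale_r, cross_cross_r, (dot_comm P h), Hh.
  apply V_ext; simpl; field; exact Hw.
Qed.

(** * Polynomial functions and thin sets *)

Fixpoint is_poly (d : nat) (f : C -> C) : Prop :=
  match d with
  | O => forall t, f t = f C0
  | S d' => exists c g, is_poly d' g /\ forall t, f t = Cadd c (Cmul t (g t))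
  end.

Definition is_polynomial (f : C -> C) : Prop := exists d, is_poly d f.

Lemma is_poly_const (c : C) : is_poly 0 (fun _ => c).
Proof. simpl; reflexivity. Qed.

Lemma is_poly_S (d : nat) (f : C -> C) : is_poly d f -> is_poly (S d) f.
Proof.
  revert f; induction d as [| d IH]; intros f H.
  - exists (f C0), (fun _ => C0); split; [apply is_poly_const |].
    intro t; rewrite (H t); ring.
  - destruct H as [c [g [Hg E]]]; exists c, g; split; auto.
Qed.

Lemma is_poly_le (d e : nat) (f : C -> C) : (d <= e)%nat -> is_poly d f -> is_poly e f.
Proof. intro H; induction H; auto using is_poly_S. Qed.

Lemma is_poly_ext (d : nat) (f g : C -> C) :
  (forall t, f t = g t) -> is_poly d f -> is_poly d g.
Proof. intro E; replace g with f; [trivial | apply functional_extensionality; exact E]. Qed.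

Lemma is_poly_add (d : nat) (f g : C -> C) :
  is_poly d f -> is_poly d g -> is_poly d (fun t => Cadd (f t) (g t)).
Proof.
  revert f g; induction d as [| d IH]; intros f g Hf Hg.
  - intro t; simpl in *; rewrite Hf, Hg; reflexivity.
  - destruct Hf as [c [f' [Hf' Ef]]], Hg as [e [g' [Hg' Eg]]].
    exists (Cadd c e), (fun t => Cadd (f' t) (g' t)); split; auto.
    intro t; rewrite Ef, Eg; ring.
Qed.

Lemma is_poly_scale (d : nat) (a : C) (f : C -> C) :
  is_poly d f -> is_poly d (fun t => Cmul a (f t)).
Proof.
  revert f; induction d as [| d IH]; intros f Hf.
  - intro t; simpl in *; rewrite Hf; reflexivity.
  - destruct Hf as [c [f' [Hf' Ef]]].
    exists (Cmul a c), (fun t => Cmul a (f' t)); split; auto.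
    intro t; rewrite Ef; ring.
Qed.

Lemma is_poly_mul (d1 d2 : nat) (f g : C -> C) :
  is_poly d1 f -> is_poly d2 g -> is_poly (d1 + d2) (fun t => Cmul (f t) (g t)).
Proof.
  revert f; induction d1 as [| d1 IH]; intros f Hf Hg.
  - apply is_poly_ext with (fun t => Cmul (f C0) (g t)).
    + intro t; simpl in Hf; rewrite (Hf t); reflexivity.
    + apply is_poly_scale; exact Hg.
  - destruct Hf as [c [f' [Hf' Ef]]].
    apply is_poly_ext with (fun t => Cadd (Cmul c (g t)) (Cmul t (Cmul (f' t) (g t)))).
    + intro t; rewrite Ef; ring.
    + apply is_poly_add.
      * apply is_poly_le with d2; [lia | apply is_poly_scale; exact Hg].
      * exists C0, (fun t => Cmul (f' t) (g t)); split; [apply IH; assumption | intro; ring].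
Qed.

Lemma is_polynomial_const (c : C) : is_polynomial (fun _ => c).
Proof. exists 0%nat; apply is_poly_const. Qed.

Lemma is_polynomial_id : is_polynomial (fun t => t).
Proof.
  exists 1%nat, C0, (fun _ => C1); split; [apply is_poly_const | intro; ring].
Qed.

Lemma is_polynomial_add (f g : C -> C) :
  is_polynomial f -> is_polynomial g -> is_polynomial (fun t => Cadd (f t) (g t)).
Proof.
  intros [d Hd] [e He]; exists (Nat.max d e); apply is_poly_add;
    [apply is_poly_le with d | apply is_poly_le with e]; auto; lia.
Qed.

Lemma is_polynomial_mul (f g : C -> C) :
  is_polynomial f -> is_polynomial g -> is_polynomial (fun t => Cmul (f t) (g t)).
Proof. intros [d Hd] [e He]; exists (d + e)%nat; apply is_poly_mul; assumption. Qed.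

Lemma is_polynomial_sub (f g : C -> C) :
  is_polynomial f -> is_polynomial g -> is_polynomial (fun t => Csub (f t) (g t)).
Proof.
  intros Hf Hg.
  destruct (is_polynomial_add f (fun t => Cmul (Copp C1) (g t)) Hf
              (is_polynomial_mul _ _ (is_polynomial_const _) Hg)) as [d Hd].
  exists d; eapply is_poly_ext; [| exact Hd]; intro; simpl; ring.
Qed.

Lemma is_poly_factor (d : nat) (f : C -> C) (a : C) :
  is_poly (S d) f -> exists g, is_poly d g /\ forall t, f t = Cadd (f a) (Cmul (Csub t a) (g t)).
Proof.
  revert f; induction d as [| d IH]; intros f [c [g [Hg Ef]]].
  - exists (fun _ => g C0); split; [apply is_poly_const |].
    intro t; rewrite !Ef; simpl in Hg; rewrite (Hg t), (Hg a); ring.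
  - destruct (IH g Hg) as [g' [Hg' Eg]].
    exists (fun t => Cadd (g t) (Cmul a (g' t))); split.
    + apply is_poly_add; [assumption | apply is_poly_S, is_poly_scale; assumption].
    + intro t; rewrite !Ef, (Eg t); ring.
Qed.

Lemma is_poly_roots_disjoint (d : nat) (f : C -> C) (P : nat -> C -> Prop) :
  is_poly d f -> f C0 <> C0 -> (forall i j t, P i t -> P j t -> i = j) ->
  ~ (forall k, (k <= d)%nat -> exists t, P k t /\ f t = C0).
Proof.
  revert f; induction d as [| d IH]; intros f Hf H0 Hdisj Hroots.
  - destruct (Hroots 0%nat (le_n _)) as [t [_ Ht]]; simpl in Hf; rewrite Hf in Ht; auto.
  - destruct (Hroots (S d) (le_n _)) as [a [Pa Fa]].
    destruct (is_poly_factor d f a Hf) as [g [Hg Eg]].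
    apply (IH g Hg); [| exact Hdisj |].
    + intro E; apply H0; rewrite Eg, Fa, E; ring.
    + intros k Hk; destruct (Hroots k ltac:(lia)) as [t [Pt Ft]]; exists t; split; auto.
      rewrite Eg, Fa in Ft.
      assert (Z : Cmul (Csub t a) (g t) = C0) by (rewrite <- Ft; ring).
      destruct (Cmul_integral _ _ Z) as [E | E]; [| exact E].
      apply Csub_eq0 in E; subst t; specialize (Hdisj _ _ _ Pt Pa); lia.
Qed.

Definition thin (B : C -> Prop) : Prop :=
  exists f, is_polynomial f /\ f C0 <> C0 /\ forall t, B t -> f t = C0.

Lemma thin_mono (B B' : C -> Prop) : thin B -> (forall t, B' t -> B t) -> thin B'.
Proof. intros [f [Hf [H0 H]]] Hs; exists f; auto. Qed.

Lemma thin_empty : thin (fun _ => False).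
Proof.
  exists (fun _ => C1); split; [apply is_polynomial_const | split; [exact C1_neq_C0 | tauto]].
Qed.

Lemma thin_union (B1 B2 : C -> Prop) : thin B1 -> thin B2 -> thin (fun t => B1 t \/ B2 t).
Proof.
  intros [f [Hf [Hf0 Hf1]]] [g [Hg [Hg0 Hg1]]].
  exists (fun t => Cmul (f t) (g t)); split; [apply is_polynomial_mul; assumption | split].
  - apply Cmul_neq0; assumption.
  - intros t [H | H]; [rewrite Hf1 | rewrite Hg1]; auto; ring.
Qed.

Lemma thin_bigunion (m : nat) (B : nat -> C -> Prop) :
  (forall i, (i < m)%nat -> thin (B i)) -> thin (fun t => exists i, (i < m)%nat /\ B i t).
Proof.
  induction m as [| m IH]; intro H.
  - eapply thin_mono; [apply thin_empty |]; intros t [i [Hi _]]; lia.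
  - eapply thin_mono;
      [apply (thin_union _ _ (IH (fun i Hi => H i ltac:(lia))) (H m ltac:(lia))) |].
    intros t [i [Hi Bi]]; destruct (Nat.eq_dec i m) as [-> | Ne]; [right; exact Bi |].
    left; exists i; split; [lia | exact Bi].
Qed.

Lemma thin_zeros (f : C -> C) : is_polynomial f -> f C0 <> C0 -> thin (fun t => f t = C0).
Proof. intros Hf H0; exists f; auto. Qed.

(* The arcs [arc s] for distinct integers [s] join 0 to 1 and meet nowhere else, so a
   polynomial vanishing somewhere on the interior of each of them would have infinitely
   many roots. *)
Definition arc (s u : R) : C := (u, s * u * (1 - u)).

Lemma thin_avoided_by_arc (B : C -> Prop) :
  thin B -> exists s, forall u, 0 < u < 1 -> ~ B (arc s u).
Proof.
  intros [f [[d Hf] [H0 HB]]]; apply NNPP; intro Hn.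
  apply (is_poly_roots_disjoint d f (fun k t => exists u, 0 < u < 1 /\ t = arc (INR k) u) Hf H0).
  - intros i j t [u [Hu ->]] [u' [Hu' E]]; unfold arc in E; injection E as E1 E2; subst u'.
    apply INR_eq; assert (0 < u * (1 - u)) by nra; nra.
  - intros k _; apply NNPP; intro Hk; apply Hn; exists (INR k); intros u Hu HBu.
    apply Hk; exists (arc (INR k) u); split; eauto.
Qed.

Definition is_polyvec (F : C -> vec3) : Prop :=
  is_polynomial (fun t => v0 (F t)) /\ is_polynomial (fun t => v1 (F t)) /\
  is_polynomial (fun t => v2 (F t)).

Lemma is_polyvec_const (v : vec3) : is_polyvec (fun _ => v).
Proof. repeat split; apply is_polynomial_const. Qed.

Lemma is_polyvec_cross (F G : C -> vec3) :
  is_polyvec F -> is_polyvec G -> is_polyvec (fun t => cross (F t) (G t)).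
Proof.
  intros [F0 [F1 F2]] [G0 [G1 G2]]; repeat split; simpl;
    apply is_polynomial_sub; apply is_polynomial_mul; assumption.
Qed.

Lemma is_polynomial_dot (F G : C -> vec3) :
  is_polyvec F -> is_polyvec G -> is_polynomial (fun t => dot (F t) (G t)).
Proof.
  intros [F0 [F1 F2]] [G0 [G1 G2]]; unfold dot;
    repeat apply is_polynomial_add; apply is_polynomial_mul; assumption.
Qed.

Lemma is_polynomial_det3 (F G H : C -> vec3) :
  is_polyvec F -> is_polyvec G -> is_polyvec H -> is_polynomial (fun t => det3 (F t) (G t) (H t)).
Proof.
  intros HF HG HH.
  destruct (is_polynomial_dot F _ HF (is_polyvec_cross G H HG HH)) as [d Hd].
  exists d; eapply is_poly_ext; [| exact Hd]; intro; symmetry; apply det3_dot.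
Qed.

Lemma thin_not_vnz (F : C -> vec3) : is_polyvec F -> vnz (F C0) -> thin (fun t => ~ vnz (F t)).
Proof.
  intros [H0 [H1 H2]] Hn; destruct (vnz_cases _ Hn) as [E | [E | E]];
    [ eapply thin_mono; [apply (thin_zeros _ H0 E) |]
    | eapply thin_mono; [apply (thin_zeros _ H1 E) |]
    | eapply thin_mono; [apply (thin_zeros _ H2 E) |] ];
    intros t Ht; apply NNPP in Ht; tauto.
Qed.

(** * Constructible arrangements *)

(* Lines and points are both represented by vectors of C^3: [cross] of two lines is their
   intersection point, and [cross] of two points is the line joining them. *)
Inductive step := Free | Pencil (a b : nat) | Join (a b a' b' : nat).

Definition step_line (s : step) (B : Config) (w : vec3) : vec3 :=
  match s with
  | Free => w
  | Pencil a b => cross (cross (B a) (B b)) w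
  | Join a b a' b' => cross (cross (B a) (B b)) (cross (B a') (B b'))
  end.

Definition step_point (s : step) (a b : nat) : Prop :=
  match s with
  | Free => False
  | Pencil x y => a = x /\ b = y
  | Join x y x' y' => (a = x /\ b = y) \/ (a = x' /\ b = y')
  end.

(* [ord] lists the lines in reverse order of construction; [th] supplies the free
   parameters of the steps. *)
Fixpoint build (ord : list (nat * step)) (th : nat -> vec3) : Config :=
  match ord with
  | nil => fun _ => vzero
  | (c, s) :: r => fun i => if Nat.eqb i c then step_line s (build r th) (th c) else build r th i
  end.

Section Admissible.

Variable A : Config.

Definition step_ok (c : nat) (s : step) (R : list nat) : Prop :=
  match s with
  | Free => True
  | Pencil a b => In a R /\ In b R /\ a <> b /\ I_of A a b c
  | Join a b a' b' => In a R /\ In b R /\ a <> b /\ I_of A a b c /\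
                      In a' R /\ In b' R /\ a' <> b' /\ I_of A a' b' c /\
                      ~ (I_of A a b a' /\ I_of A a b b')
  end.

Definition step_covers (c : nat) (s : step) (R : list nat) : Prop :=
  forall a' b', In a' R -> In b' R -> a' <> b' -> I_of A a' b' c ->
    exists a b, step_point s a b /\ I_of A a b a' /\ I_of A a b b'.

Fixpoint admissible (ord : list (nat * step)) : Prop :=
  match ord with
  | nil => True
  | (c, s) :: r => admissible r /\ ~ In c (map fst r) /\
                   step_ok c s (map fst r) /\ step_covers c s (map fst r)
  end.

Lemma step_ok_point (c : nat) (s : step) (R : list nat) (a b : nat) :
  step_ok c s R -> step_point s a b -> In a R /\ In b R /\ a <> b /\ I_of A a b c.
Proof.
  destruct s; simpl; [tauto | intros H [-> ->]; tauto |].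
  intros H [[-> ->] | [-> ->]]; tauto.
Qed.

Lemma I_of_rot (i j k : nat) : I_of A i j k -> I_of A j k i.
Proof. intros [p H]; exists p; tauto. Qed.

Lemma build_ne (ord : list (nat * step)) (c : nat) (s : step) (th : nat -> vec3) (i : nat) :
  i <> c -> build ((c, s) :: ord) th i = build ord th i.
Proof. intro H; simpl; destruct (Nat.eqb_spec i c); [contradiction | reflexivity]. Qed.

Lemma build_eq (ord : list (nat * step)) (c : nat) (s : step) (th : nat -> vec3) :
  build ((c, s) :: ord) th c = step_line s (build ord th) (th c).
Proof. simpl; rewrite Nat.eqb_refl; reflexivity. Qed.

Lemma build_agree (ord : list (nat * step)) (th1 th2 : nat -> vec3) :
  (forall i, In i (map fst ord) -> th1 i = th2 i) -> build ord th1 = build ord th2.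
Proof.
  induction ord as [| [c s] r IH]; intro H; [reflexivity |].
  simpl; rewrite IH, (H c); [reflexivity | simpl; auto |].
  intros i Hi; apply H; simpl; auto.
Qed.

Definition lines_distinct (ids : list nat) (X : Config) : Prop :=
  forall i j, In i ids -> In j ids -> i <> j -> vnz (cross (X i) (X j)).

Definition collinear_on (ids : list nat) (X : Config) : Prop :=
  forall i j k, In i ids -> In j ids -> In k ids -> I_of A i j k -> det3 (X i) (X j) (X k) = C0.

Lemma build_new_line_collinear (c : nat) (s : step) (r : list (nat * step)) (th : nat -> vec3)
    (a' b' : nat) :
  step_ok c s (map fst r) -> step_covers c s (map fst r) ->
  lines_distinct (map fst r) (build r th) -> collinear_on (map fst r) (build r th) ->
  In a' (map fst r) -> In b' (map fst r) -> I_of A a' b' c ->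
  det3 (build r th a') (build r th b') (build ((c, s) :: r) th c) = C0.
Proof.
  intros Hok Hcov Hdist Hcol Ha' Hb' HI.
  destruct (Nat.eq_dec a' b') as [<- | Ne]; [apply det3_uuw |].
  destruct (Hcov a' b' Ha' Hb' Ne HI) as [a [b [Hp [Ia Ib]]]].
  destruct (step_ok_point c s _ a b Hok Hp) as [Ha [Hb [Hab _]]].
  (* all three lines pass through the point [H_a x H_b] *)
  apply (det3_eq0_of_orth (cross (build r th a) (build r th b))); [apply Hdist; assumption | | |].
  - rewrite <- det3_dot_cross; apply Hcol; assumption.
  - rewrite <- det3_dot_cross; apply Hcol; assumption.
  - rewrite build_eq; destruct s; simpl in Hp; [contradiction | |].
    + destruct Hp as [-> ->]; apply dot_cross_l.
    + destruct Hp as [[-> ->] | [-> ->]]; [apply dot_cross_l | apply dot_cross_r].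
Qed.

Lemma build_collinear (ord : list (nat * step)) (th : nat -> vec3) :
  admissible ord -> lines_distinct (map fst ord) (build ord th) ->
  collinear_on (map fst ord) (build ord th).
Proof.
  induction ord as [| [c s] r IH]; [intros _ _ i j k [] |].
  intros [Hr [Hc [Hok Hcov]]] Hdist.
  assert (Hdist_r : lines_distinct (map fst r) (build r th)).
  { intros i j Hi Hj Hij; specialize (Hdist i j (or_intror Hi) (or_intror Hj) Hij).
    rewrite !build_ne in Hdist by (intros ->; contradiction); exact Hdist. }
  pose proof (IH Hr Hdist_r) as Hcol.
  assert (Hprev : forall i, In i (c :: map fst r) -> i <> c -> In i (map fst r))
    by (intros i [-> | Hi] Ne; [contradiction | exact Hi]).
  intros i j k Hi Hj Hk HI; simpl in Hi, Hj, Hk.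
  destruct (Nat.eq_dec i c) as [-> | Ei], (Nat.eq_dec j c) as [-> | Ej],
    (Nat.eq_dec k c) as [-> | Ek];
    try apply det3_uuw; try apply det3_uvu; try apply det3_uvv;
    try rewrite (build_ne r c s th i Ei); try rewrite (build_ne r c s th j Ej);
    try rewrite (build_ne r c s th k Ek).
  - rewrite det3_rot; apply build_new_line_collinear; auto using I_of_rot.
  - rewrite det3_rot, det3_rot; apply build_new_line_collinear; auto using I_of_rot.
  - apply build_new_line_collinear; auto.
  - apply Hcol; auto.
Qed.

End Admissible.

(** * Every realization is built from an admissible order *)

Definition proportional_on (D : nat -> Prop) (X x : Config) : Prop :=
  exists lam : nat -> C, forall i, D i -> lam i <> C0 /\ X i = vscale (lam i) (x i).

Lemma vscale_one (v : vec3) : vscale C1 v = v.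
Proof. vec_ring. Qed.

Lemma vscale_vscale (a b : C) (v : vec3) : vscale a (vscale b v) = vscale (Cmul a b) v.
Proof. vec_ring. Qed.

Lemma I_of_repeat (n : nat) (A : Config) (a b : nat) :
  is_arrangement n A -> (a < n)%nat -> (b < n)%nat -> a <> b -> I_of A a b a /\ I_of A a b b.
Proof.
  intros [Hnz Hd] Ha Hb Hab.
  pose proof (cross_vnz _ _ (Hnz a Ha) (Hnz b Hb) (Hd a b Ha Hb Hab)) as Hp.
  assert (Oa : on_line (cross (A a) (A b)) (A a)) by apply dot_cross_l.
  assert (Ob : on_line (cross (A a) (A b)) (A b)) by apply dot_cross_r.
  split; exists (cross (A a) (A b)); tauto.
Qed.

Section Realizations.

Variables (n : nat) (A x : Config).
Hypothesis HA : is_arrangement n A.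
Hypothesis Hx : realization_space n (I_of A) x.

Lemma realization_cross_vnz (a b : nat) :
  (a < n)%nat -> (b < n)%nat -> a <> b -> vnz (cross (x a) (x b)).
Proof.
  destruct Hx as [Hnz [Hd _]]; intros Ha Hb Hab; apply cross_vnz; auto.
Qed.

Lemma realization_incident (a b e : nat) :
  (a < n)%nat -> (b < n)%nat -> (e < n)%nat -> a <> b ->
  dot (x e) (cross (x a) (x b)) = C0 <-> I_of A a b e.
Proof.
  intros Ha Hb He Hab.
  destruct (Nat.eq_dec e a) as [-> | Nea].
  { split; [intros _; apply I_of_repeat with n | intros _; rewrite dot_comm; apply dot_cross_l];
      assumption. }
  destruct (Nat.eq_dec e b) as [-> | Neb].
  { split; [intros _; apply I_of_repeat with n | intros _; rewrite dot_comm; apply dot_cross_r];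
      assumption. }
  rewrite <- det3_dot_cross; apply (proj2 (proj2 Hx)); auto.
Qed.

Lemma realization_join_vnz (a b a' b' : nat) :
  (a < n)%nat -> (b < n)%nat -> (a' < n)%nat -> (b' < n)%nat -> a <> b -> a' <> b' ->
  ~ (I_of A a b a' /\ I_of A a b b') ->
  vnz (cross (cross (x a) (x b)) (cross (x a') (x b'))).
Proof.
  intros Ha Hb Ha' Hb' Hab Hab' Hnot Hz; apply Hnot.
  assert (Hpq : same_point (cross (x a) (x b)) (cross (x a') (x b'))).
  { destruct Hz as [Z0 [Z1 Z2]].
    apply same_of_cross; [apply realization_cross_vnz .. | apply V_ext]; assumption. }
  (* the point [H_a x H_b] would coincide with [H_a' x H_b'], hence lie on [H_a'] and [H_b'] *)
  split; apply realization_incident; auto; rewrite dot_comm;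
    apply (on_line_same _ _ _ Hpq); [apply dot_cross_l | apply dot_cross_r].
Qed.

Lemma step_line_realizes (c : nat) (s : step) (R : list nat) (B : Config) :
  (c < n)%nat -> (forall i, In i R -> (i < n)%nat) -> step_ok A c s R ->
  proportional_on (fun i => In i R) B x ->
  exists w lc, lc <> C0 /\ step_line s B w = vscale lc (x c).
Proof.
  intros Hc HR Hok [lam Hlam].
  assert (Hpt : forall a b, In a R -> In b R ->
            cross (B a) (B b) = vscale (Cmul (lam a) (lam b)) (cross (x a) (x b))).
  { intros a b Ha Hb; rewrite (proj2 (Hlam a Ha)), (proj2 (Hlam b Hb)); apply cross_scale. }
  destruct s as [| a b | a b a' b']; simpl in Hok.
  - exists (x c), C1; split; [exact C1_neq_C0 | symmetry; apply vscale_one].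
  - destruct Hok as [Ha [Hb [Hab HI]]].
    destruct (cross_surj (cross (B a) (B b)) (x c)) as [w Hw].
    + rewrite Hpt by assumption; apply vnz_scale;
        [apply Cmul_neq0; apply Hlam | apply realization_cross_vnz]; auto.
    + rewrite Hpt, dot_scale_r, (proj2 (realization_incident a b c (HR a Ha) (HR b Hb) Hc Hab) HI)
        by assumption; ring.
    + exists w, C1; split; [exact C1_neq_C0 | rewrite vscale_one; exact Hw].
  - destruct Hok as [Ha [Hb [Hab [HI [Ha' [Hb' [Hab' [HI' Hnot]]]]]]]].
    assert (Hsame : same_point (x c) (cross (cross (x a) (x b)) (cross (x a') (x b')))).
    { apply same_of_cross; [apply Hx; assumption | apply realization_join_vnz; auto |].
      apply cross_eq0_of_dot; apply realization_incident; auto. }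
    destruct Hsame as [k [Hk Ek]].
    exists (x c), (Cmul (Cmul (Cmul (lam a) (lam b)) (Cmul (lam a') (lam b'))) k); split.
    + repeat apply Cmul_neq0; auto; apply Hlam; assumption.
    + simpl; rewrite !Hpt, cross_scale, Ek, vscale_vscale by assumption; reflexivity.
Qed.

Lemma build_realizes (ord : list (nat * step)) :
  admissible A ord -> (forall i, In i (map fst ord) -> (i < n)%nat) ->
  exists th, proportional_on (fun i => In i (map fst ord)) (build ord th) x.
Proof.
  induction ord as [| [c s] r IH]; intros Hadm Hn.
  { exists (fun _ => vzero), (fun _ => C1); intros i []. }
  destruct Hadm as [Hr [Hc [Hok _]]].
  destruct (IH Hr (fun i Hi => Hn i (or_intror Hi))) as [th0 Hprop].
  destruct (step_line_realizes c s (map fst r) (build r th0)) as [w [lc [Hlc Ew]]];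
    [apply Hn; left; reflexivity | intros i Hi; apply Hn; right; exact Hi | exact Hok
    | exact Hprop |].
  destruct Hprop as [lam0 Hlam0].
  set (th := fun i => if Nat.eqb i c then w else th0 i).
  assert (Hagree : build r th = build r th0).
  { apply build_agree; intros i Hi; unfold th.
    destruct (Nat.eqb_spec i c) as [-> | _]; [contradiction | reflexivity]. }
  exists th, (fun i => if Nat.eqb i c then lc else lam0 i); intros i Hi.
  destruct (Nat.eqb_spec i c) as [-> | Ne].
  - rewrite build_eq, Hagree; unfold th; rewrite Nat.eqb_refl; split; assumption.
  - rewrite build_ne, Hagree by exact Ne; apply Hlam0.
    simpl in Hi; destruct Hi as [-> | Hi]; [contradiction | exact Hi].
Qed.

End Realizations.

(** * Peeling off lines with few multiple points *)

Definition three_mult_points (A : Config) (J : nat -> Prop) (h : nat) : Prop :=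
  exists p1 p2 p3 : vec3,
    ~ same_point p1 p2 /\ ~ same_point p2 p3 /\ ~ same_point p1 p3 /\
    in_mult A J p1 /\ on_line p1 (A h) /\
    in_mult A J p2 /\ on_line p2 (A h) /\
    in_mult A J p3 /\ on_line p3 (A h).

Definition peelable (n : nat) (A : Config) : Prop :=
  forall J : nat -> Prop, (forall i, J i -> (i < n)%nat) -> (exists i, J i) ->
    exists h, J h /\ ~ three_mult_points A J h.

Lemma mult_point_other_lines (A : Config) (J : nat -> Prop) (h : nat) (p : vec3) :
  in_mult A J p -> exists a b, J a /\ J b /\ a <> b /\ a <> h /\ b <> h /\
                               on_line p (A a) /\ on_line p (A b).
Proof.
  intros [_ [i [j [k [Ji [Jj [Jk [Hij [Hjk [Hik [Oi [Oj Ok]]]]]]]]]]]].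
  destruct (Nat.eq_dec i h) as [-> | Ni]; [exists j, k; repeat split; auto |].
  destruct (Nat.eq_dec j h) as [-> | Nj]; [exists i, k | exists i, j]; repeat split; auto.
Qed.

Lemma step_covers_of_points (A : Config) (h : nat) (s : step) (R : list nat) (pts : list vec3) :
  (forall p a' b', vnz p -> In a' R -> In b' R -> a' <> b' ->
     on_line p (A a') -> on_line p (A b') -> on_line p (A h) ->
     exists q, In q pts /\ same_point q p) ->
  (forall q, In q pts -> exists a b, step_point s a b /\ on_line q (A a) /\ on_line q (A b)) ->
  step_covers A h s R.
Proof.
  intros Hpts Hq a' b' Ha' Hb' Hab [p [Hp [O1 [O2 O3]]]].
  destruct (Hpts p a' b' Hp Ha' Hb' Hab O1 O2 O3) as [q [Hq' Sq]].
  destruct (Hq q Hq') as [a [b [Hs [Oa Ob]]]].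
  assert (Oa' : on_line p (A a)) by (apply on_line_same with q; auto using same_point_sym).
  assert (Ob' : on_line p (A b)) by (apply on_line_same with q; auto using same_point_sym).
  exists a, b; split; [exact Hs |]; split; exists p; tauto.
Qed.

Section Peeling.

Variables (n : nat) (A : Config).
Hypothesis HA : is_arrangement n A.

Lemma same_point_on_arrangement (a b : nat) (p q : vec3) :
  (a < n)%nat -> (b < n)%nat -> a <> b -> vnz p -> vnz q ->
  on_line p (A a) -> on_line p (A b) -> on_line q (A a) -> on_line q (A b) -> same_point p q.
Proof.
  destruct HA as [Hnz Hd]; intros Ha Hb Hab; apply same_point_of_on_lines; auto.
Qed.

Lemma join_nondegenerate (a b a' b' : nat) (p1 p2 : vec3) :
  (a < n)%nat -> (b < n)%nat -> (a' < n)%nat -> (b' < n)%nat -> a <> b -> a' <> b' ->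
  vnz p1 -> vnz p2 -> ~ same_point p1 p2 ->
  on_line p1 (A a) -> on_line p1 (A b) -> on_line p2 (A a') -> on_line p2 (A b') ->
  ~ (I_of A a b a' /\ I_of A a b b').
Proof.
  intros Ha Hb Ha' Hb' Hab Hab' Hp1 Hp2 N12 O1a O1b O2a O2b
    [[q [Hq [Qa [Qb Qa']]]] [r [Hr [Ra [Rb Rb']]]]].
  assert (Sq : same_point p1 q) by (apply (same_point_on_arrangement a b); assumption).
  assert (Sr : same_point p1 r) by (apply (same_point_on_arrangement a b); assumption).
  apply N12, (same_point_on_arrangement a' b'); try assumption;
    [apply on_line_same with q | apply on_line_same with r]; assumption.
Qed.

Lemma step_exists (h : nat) (l R : list nat) :
  (forall i, In i l -> (i < n)%nat) -> In h l -> (forall i, In i R <-> In i l /\ i <> h) ->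
  ~ three_mult_points A (fun i => In i l) h ->
  exists s, step_ok A h s R /\ step_covers A h s R.
Proof.
  intros Hl Hh HR Hno.
  set (M := fun p => in_mult A (fun i => In i l) p /\ on_line p (A h)).
  assert (HM : forall p a' b', vnz p -> In a' R -> In b' R -> a' <> b' ->
                 on_line p (A a') -> on_line p (A b') -> on_line p (A h) -> M p).
  { intros p a' b' Hp Ha' Hb' Hab O1 O2 O3; apply HR in Ha', Hb'.
    split; [split; [exact Hp | exists a', b', h; tauto] | exact O3]. }
  destruct (classic (exists p, M p)) as [[p1 [Hm1 O1]] | NoM].
  2: { exists Free; split; [exact I |]; apply (step_covers_of_points A h Free R nil);
       [| intros q []].
       intros p a' b' Hp Ha' Hb' Hab O1 O2 O3; exfalso; apply NoM; exists p.
       apply (HM p a' b'); assumption. }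
  pose proof (proj1 Hm1) as Hp1.
  destruct (mult_point_other_lines A _ h p1 Hm1) as [a [b [Ja [Jb [Hab [Hah [Hbh [Oa Ob]]]]]]]].
  destruct (classic (exists p2, M p2 /\ ~ same_point p1 p2)) as [[p2 [[Hm2 O2] N12]] | No2].
  - pose proof (proj1 Hm2) as Hp2.
    destruct (mult_point_other_lines A _ h p2 Hm2)
      as [a' [b' [Ja' [Jb' [Hab' [Hah' [Hbh' [Oa' Ob']]]]]]]].
    exists (Join a b a' b'); split.
    + simpl; repeat split; try (apply HR; split; assumption); try assumption;
        [exists p1; tauto | exists p2; tauto |].
      apply (join_nondegenerate a b a' b' p1 p2); auto.
    + apply (step_covers_of_points A h _ R (p1 :: p2 :: nil)).
      * intros p c d Hp Hc Hd Hcd Oc Od Oh; assert (Hm : M p) by (apply (HM p c d); assumption).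
        destruct (classic (same_point p1 p)) as [S1 | S1]; [exists p1; simpl; auto |].
        destruct (classic (same_point p2 p)) as [S2 | S2]; [exists p2; simpl; auto |].
        exfalso; apply Hno; exists p1, p2, p; unfold M in Hm; tauto.
      * intros q [<- | [<- | []]]; [exists a, b | exists a', b']; simpl; tauto.
  - exists (Pencil a b); split.
    + simpl; repeat split; try (apply HR; split; assumption); try assumption; exists p1; tauto.
    + apply (step_covers_of_points A h _ R (p1 :: nil)).
      * intros p c d Hp Hc Hd Hcd Oc Od Oh; assert (Hm : M p) by (apply (HM p c d); assumption).
        exists p1; split; [simpl; auto |].
        apply NNPP; intro N; apply No2; exists p; auto.
      * intros q [<- | []]; exists a, b; simpl; tauto.
Qed.

Lemma admissible_order_exists (m : nat) (l : list nat) :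
  peelable n A -> (length l <= m)%nat -> (forall i, In i l -> (i < n)%nat) ->
  exists ord, admissible A ord /\ forall i, In i (map fst ord) <-> In i l.
Proof.
  intro Hpeel; revert l; induction m as [| m IH]; intros l Hlen Hl.
  { destruct l; [exists nil; simpl; tauto | simpl in Hlen; lia]. }
  destruct l as [| x0 l0]; [exists nil; simpl; tauto |].
  set (l := x0 :: l0) in *.
  destruct (Hpeel (fun i => In i l) Hl (ex_intro _ x0 (or_introl eq_refl))) as [h [Hh Hno]].
  set (R := remove Nat.eq_dec h l).
  assert (HR : forall i, In i R <-> In i l /\ i <> h)
    by (intro i; split; [apply in_remove | intros [H1 H2]; apply in_in_remove; auto]).
  assert (Hshort : (length R < length l)%nat) by (apply remove_length_lt; exact Hh).
  destruct (IH R ltac:(lia) (fun i Hi => Hl i (proj1 (proj1 (HR i) Hi)))) as [r [Hr Er]].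
  destruct (step_exists h l (map fst r) Hl Hh (fun i => iff_trans (Er i) (HR i)) Hno)
    as [s [Hok Hcov]].
  exists ((h, s) :: r); split.
  - simpl; repeat split; auto; intro Hin; apply Er, HR in Hin; tauto.
  - intro i; simpl; rewrite Er, HR; split.
    + intros [<- | [H1 _]]; assumption.
    + intro Hi; destruct (Nat.eq_dec h i); [left | right]; auto.
Qed.

End Peeling.

(** * Paths in the realization space *)

Definition segment (thp thq : nat -> vec3) (t : C) : nat -> vec3 :=
  fun i => vadd (thp i) (vscale t (vsub (thq i) (thp i))).

Lemma segment_0 (thp thq : nat -> vec3) : segment thp thq C0 = thp.
Proof. apply functional_extensionality; intro i; unfold segment; vec_ring. Qed.

Lemma segment_1 (thp thq : nat -> vec3) : segment thp thq C1 = thq.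
Proof.
  apply functional_extensionality; intro i; unfold segment.
  destruct (thp i), (thq i); apply V_ext; simpl; ring.
Qed.

Lemma build_segment_polyvec (ord : list (nat * step)) (thp thq : nat -> vec3) (i : nat) :
  is_polyvec (fun t => build ord (segment thp thq t) i).
Proof.
  assert (Hseg : forall c, is_polyvec (fun t => segment thp thq t c)).
  { intro c; split; [| split]; simpl; apply is_polynomial_add; try apply is_polynomial_const;
      apply is_polynomial_mul; try apply is_polynomial_id; apply is_polynomial_const. }
  revert i; induction ord as [| [c s] r IH]; intro i; simpl; [apply is_polyvec_const |].
  destruct (Nat.eqb i c); [| apply IH].
  destruct s; simpl; repeat apply is_polyvec_cross; auto.
Qed.

(* The open conditions defining [realization_space]; the closed ones (collinearities) hold
   for every built configuration by [build_collinear]. *)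
Definition generic (n : nat) (A X : Config) : Prop :=
  (forall i, (i < n)%nat -> vnz (X i)) /\
  (forall i j, (i < n)%nat -> (j < n)%nat -> i <> j -> vnz (cross (X i) (X j))) /\
  (forall i j k, (i < n)%nat -> (j < n)%nat -> (k < n)%nat -> i <> j -> j <> k -> i <> k ->
     ~ I_of A i j k -> det3 (X i) (X j) (X k) <> C0).

Lemma generic_build_realization (n : nat) (A : Config) (ord : list (nat * step))
    (th : nat -> vec3) :
  admissible A ord -> (forall i, In i (map fst ord) <-> (i < n)%nat) ->
  generic n A (build ord th) -> realization_space n (I_of A) (build ord th).
Proof.
  intros Hadm Hord [Hnz [Hdist Hdet]]; split; [exact Hnz | split].
  - intros i j Hi Hj Hij Hs; apply (Hdist i j Hi Hj Hij).
    rewrite (cross_of_same _ _ Hs); simpl; tauto.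
  - intros i j k Hi Hj Hk Hij Hjk Hik; split.
    + intro D; apply NNPP; intro NI; exact (Hdet i j k Hi Hj Hk Hij Hjk Hik NI D).
    + apply (build_collinear A); try apply Hord; auto.
      intros a b Ha Hb Hab; apply Hdist; try apply Hord; assumption.
Qed.

Lemma generic_of_proportional (n : nat) (A x X : Config) :
  realization_space n (I_of A) x -> proportional_on (fun i => (i < n)%nat) X x ->
  generic n A X.
Proof.
  intros [Hnz [Hd Hdet]] [lam H]; split; [| split].
  - intros i Hi; destruct (H i Hi) as [L ->]; apply vnz_scale; auto.
  - intros i j Hi Hj Hij; destruct (H i Hi) as [Li ->], (H j Hj) as [Lj ->].
    rewrite cross_scale; apply vnz_scale; [apply Cmul_neq0 | apply cross_vnz]; auto.
  - intros i j k Hi Hj Hk Hij Hjk Hik NI.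
    destruct (H i Hi) as [Li ->], (H j Hj) as [Lj ->], (H k Hk) as [Lk ->].
    rewrite det3_scale; apply Cmul_neq0; [repeat apply Cmul_neq0; assumption |].
    intro D; apply NI, (Hdet i j k); assumption.
Qed.

Lemma thin_not_generic (n : nat) (A : Config) (X : C -> Config) :
  (forall i, is_polyvec (fun t => X t i)) -> generic n A (X C0) ->
  thin (fun t => ~ generic n A (X t)).
Proof.
  intros HX [G1 [G2 G3]].
  assert (T1 : thin (fun t => exists i, (i < n)%nat /\ ~ vnz (X t i)))
    by (apply thin_bigunion; intros i Hi; apply thin_not_vnz; auto).
  assert (T2 : thin (fun t => exists i, (i < n)%nat /\ exists j, (j < n)%nat /\
                 i <> j /\ ~ vnz (cross (X t i) (X t j)))).
  { apply thin_bigunion; intros i Hi; apply thin_bigunion; intros j Hj.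
    destruct (Nat.eq_dec i j) as [E | Ne];
      [eapply thin_mono; [apply thin_empty | intros t [N _]; auto] |].
    eapply thin_mono; [apply (thin_not_vnz (fun t => cross (X t i) (X t j))) |
                       intros t [_ N]; exact N].
    - apply is_polyvec_cross; apply HX.
    - apply G2; assumption. }
  assert (T3 : thin (fun t => exists i, (i < n)%nat /\ exists j, (j < n)%nat /\
                 exists k, (k < n)%nat /\ (i <> j /\ j <> k /\ i <> k /\ ~ I_of A i j k) /\
                 det3 (X t i) (X t j) (X t k) = C0)).
  { apply thin_bigunion; intros i Hi; apply thin_bigunion; intros j Hj;
      apply thin_bigunion; intros k Hk.
    destruct (classic (i <> j /\ j <> k /\ i <> k /\ ~ I_of A i j k)) as [Cd | Cd];
      [| eapply thin_mono; [apply thin_empty | intros t [D _]; auto]].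
    eapply thin_mono; [apply (thin_zeros (fun t => det3 (X t i) (X t j) (X t k))) |
                       intros t [_ D]; exact D].
    - apply is_polynomial_det3; apply HX.
    - destruct Cd as [Hij [Hjk [Hik NI]]]; apply G3; assumption. }
  eapply thin_mono; [apply (thin_union _ _ (thin_union _ _ T1 T2) T3) |].
  intros t NG; apply NNPP; intro NB; apply NG; split; [| split].
  - intros i Hi; apply NNPP; intro N; apply NB; left; left; exists i; auto.
  - intros i j Hi Hj Hij; apply NNPP; intro N; apply NB; left; right.
    exists i; split; [| exists j]; auto.
  - intros i j k Hi Hj Hk Hij Hjk Hik NI D; apply NB; right.
    exists i; split; [| exists j; split; [| exists k]]; tauto.
Qed.

Definition Ccontinuous (g : R -> C) : Prop :=
  forall u, continuity_pt (fun v => fst (g v)) u /\ continuity_pt (fun v => snd (g v)) u.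

Lemma cont_add (f g : R -> R) (u : R) :
  continuity_pt f u -> continuity_pt g u -> continuity_pt (fun v => f v + g v) u.
Proof. apply continuity_pt_plus. Qed.

Lemma cont_sub (f g : R -> R) (u : R) :
  continuity_pt f u -> continuity_pt g u -> continuity_pt (fun v => f v - g v) u.
Proof. apply continuity_pt_minus. Qed.

Lemma cont_mul (f g : R -> R) (u : R) :
  continuity_pt f u -> continuity_pt g u -> continuity_pt (fun v => f v * g v) u.
Proof. apply continuity_pt_mult. Qed.

Lemma cont_const (c u : R) : continuity_pt (fun _ => c) u.
Proof. apply continuity_pt_const; intros ? ?; reflexivity. Qed.

Lemma is_poly_continuous (d : nat) (f : C -> C) (g : R -> C) :
  is_poly d f -> Ccontinuous g -> Ccontinuous (fun u => f (g u)).
Proof.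
  revert f; induction d as [| d IH]; intros f Hf Hg.
  - replace (fun u => f (g u)) with (fun _ : R => f C0)
      by (apply functional_extensionality; intro u; symmetry; apply Hf).
    intro u; split; apply cont_const.
  - destruct Hf as [c [q [Hq Ef]]].
    replace (fun u => f (g u)) with (fun u => Cadd c (Cmul (g u) (q (g u))))
      by (apply functional_extensionality; intro u; symmetry; apply Ef).
    intro u; destruct (IH q Hq Hg u) as [Q1 Q2], (Hg u) as [G1 G2]; simpl; split;
      apply cont_add; try apply cont_const;
      first [apply cont_sub | apply cont_add]; apply cont_mul; assumption.
Qed.

Lemma is_polynomial_continuous (f : C -> C) (g : R -> C) :
  is_polynomial f -> Ccontinuous g -> Ccontinuous (fun u => f (g u)).
Proof. intros [d Hd]; apply is_poly_continuous with d; exact Hd. Qed.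

(* [sin2] maps [R] onto [[0, 1]], reaching 0 at 0 and 1 at [PI / 2]; composing with it
   turns an arc on [[0, 1]] into a continuous map defined on all of [R]. *)
Definition sin2 (u : R) : R := sin u * sin u.

Lemma sin2_range (u : R) : 0 <= sin2 u <= 1.
Proof. unfold sin2; pose proof (sin2_cos2 u) as H; unfold Rsqr in H; split; nra. Qed.

Lemma arc_sin2_continuous (s : R) : Ccontinuous (fun u => arc s (sin2 u)).
Proof.
  intro u; unfold arc, sin2; simpl.
  assert (Hs : continuity_pt sin u) by apply continuity_sin.
  split; [apply cont_mul; assumption |].
  apply cont_mul; [apply cont_mul; [apply cont_const | apply cont_mul; assumption] |].
  apply cont_sub; [apply cont_const | apply cont_mul; assumption].
Qed.

Lemma arc_0 (s : R) : arc s 0 = C0.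
Proof. apply C_ext; simpl; ring. Qed.

Lemma arc_1 (s : R) : arc s 1 = C1.
Proof. apply C_ext; simpl; ring. Qed.

Definition vcontinuous (f : R -> vec3) : Prop :=
  Ccontinuous (fun u => v0 (f u)) /\ Ccontinuous (fun u => v1 (f u)) /\
  Ccontinuous (fun u => v2 (f u)).

Lemma realization_path (n : nat) (A : Config) (ord : list (nat * step)) (thp thq : nat -> vec3) :
  admissible A ord -> (forall i, In i (map fst ord) <-> (i < n)%nat) ->
  generic n A (build ord thp) -> generic n A (build ord thq) ->
  exists pi : R -> Config,
    (forall u, realization_space n (I_of A) (pi u)) /\
    (forall i, (i < n)%nat -> vcontinuous (fun u => pi u i)) /\
    pi 0 = build ord thp /\ pi (PI / 2) = build ord thq.
Proof.
  intros Hadm Hord Gp Gq.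
  set (X := fun t => build ord (segment thp thq t)).
  assert (X0 : X C0 = build ord thp) by (unfold X; rewrite segment_0; reflexivity).
  assert (X1 : X C1 = build ord thq) by (unfold X; rewrite segment_1; reflexivity).
  destruct (thin_avoided_by_arc _ (thin_not_generic n A X (build_segment_polyvec ord thp thq)
                                     ltac:(rewrite X0; exact Gp))) as [s Hs].
  exists (fun u => X (arc s (sin2 u))); split; [| split; [| split]].
  - intro u; apply generic_build_realization; [exact Hadm | exact Hord |].
    change (generic n A (X (arc s (sin2 u)))).
    destruct (sin2_range u) as [[L0 | E0] [L1 | E1]].
    + apply NNPP, Hs; split; assumption.
    + rewrite E1, arc_1, X1; exact Gq.
    + rewrite <- E0, arc_0, X0; exact Gp.
    + rewrite <- E0, arc_0, X0; exact Gp.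
  - intros i Hi; destruct (build_segment_polyvec ord thp thq i) as [B0 [B1 B2]];
      split; [| split]; [ exact (is_polynomial_continuous _ _ B0 (arc_sin2_continuous s))
                         | exact (is_polynomial_continuous _ _ B1 (arc_sin2_continuous s))
                         | exact (is_polynomial_continuous _ _ B2 (arc_sin2_continuous s)) ].
  - unfold sin2; rewrite sin_0, Rmult_0_l, arc_0; exact X0.
  - unfold sin2; rewrite sin_PI2, Rmult_1_l, arc_1; exact X1.
Qed.

Definition near (x : R) (P : R -> Prop) : Prop :=
  exists d, 0 < d /\ forall w, Rabs (w - x) < d -> P w.

Lemma near_and (x : R) (P Q : R -> Prop) : near x P -> near x Q -> near x (fun w => P w /\ Q w).
Proof.
  intros [d1 [H1 P1]] [d2 [H2 Q1]]; exists (Rmin d1 d2); split; [apply Rmin_pos; assumption |].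
  intros w Hw; split; [apply P1 | apply Q1]; eapply Rlt_le_trans; eauto;
    [apply Rmin_l | apply Rmin_r].
Qed.

Lemma near_forall_lt (x : R) (m : nat) (P : nat -> R -> Prop) :
  (forall i, (i < m)%nat -> near x (P i)) -> near x (fun w => forall i, (i < m)%nat -> P i w).
Proof.
  induction m as [| m IH]; intro H; [exists 1; split; [lra | intros; lia] |].
  destruct (near_and x _ _ (IH (fun i Hi => H i ltac:(lia))) (H m ltac:(lia))) as [d [Hd Pd]].
  exists d; split; [exact Hd |]; intros w Hw i Hi; destruct (Pd w Hw) as [Pl Pm].
  destruct (Nat.eq_dec i m) as [-> | Ne]; [exact Pm | apply Pl; lia].
Qed.

Lemma continuity_pt_near (r : R -> R) (x eps : R) :
  continuity_pt r x -> 0 < eps -> near x (fun w => Rabs (r x - r w) < eps).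
Proof.
  intros Hc He; destruct (Hc eps He) as [d [Hd Hw]]; exists d; split; [exact Hd |].
  intros w Hwx; destruct (Req_dec w x) as [-> | Ne].
  - unfold Rminus; rewrite Rplus_opp_r, Rabs_R0; exact He.
  - rewrite Rabs_minus_sym; apply Hw; split; [split; [exact I | auto] | exact Hwx].
Qed.

Lemma vcontinuous_near (f : R -> vec3) (x eps : R) :
  vcontinuous f -> 0 < eps -> near x (fun w => vclose eps (f x) (f w)).
Proof.
  intros [F0 [F1 F2]] He; unfold vclose, Cclose.
  destruct (F0 x) as [C0 C0'], (F1 x) as [C1 C1'], (F2 x) as [C2 C2'].
  repeat apply near_and;
    match goal with
    | Hc : continuity_pt ?r x |- _ => exact (continuity_pt_near r x eps Hc He)
    end.
Qed.

Lemma open_path_near (n : nat) (U : Config -> Prop) (pi : R -> Config) (x : R) :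
  (forall i, (i < n)%nat -> vcontinuous (fun u => pi u i)) -> cfg_open n U -> U (pi x) ->
  near x (fun w => U (pi w)).
Proof.
  intros Hc HU Ux; destruct (HU _ Ux) as [eps [He Heps]].
  destruct (near_forall_lt x n (fun i w => vclose eps (pi x i) (pi w i))) as [d [Hd Pd]].
  { intros i Hi; apply (vcontinuous_near (fun u => pi u i)); auto. }
  exists d; split; [exact Hd |]; intros w Hw; apply Heps; exact (Pd w Hw).
Qed.

(* The indicator of [U] along the path is locally constant, hence continuous, so the
   intermediate value theorem forbids it to jump from -1 to 1. *)
Lemma no_path_across_separation (n : nat) (S U V : Config -> Prop) (pi : R -> Config) (a b : R) :
  a < b -> cfg_open n U -> cfg_open n V ->
  (forall x, S x -> U x \/ V x) -> (forall x, S x -> U x -> V x -> False) ->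
  (forall u, S (pi u)) -> (forall i, (i < n)%nat -> vcontinuous (fun u => pi u i)) ->
  U (pi a) -> V (pi b) -> False.
Proof.
  intros Hab HU HV Hcov Hdis HS Hc Ua Vb.
  set (h := fun u => if excluded_middle_informative (U (pi u)) then -1 else 1).
  assert (Hloc : forall x, near x (fun w => h w = h x)).
  { intro x; unfold h; destruct (excluded_middle_informative (U (pi x))) as [Ux | Nx].
    - destruct (open_path_near n U pi x Hc HU Ux) as [d [Hd Pd]].
      exists d; split; [exact Hd |]; intros w Hw.
      destruct (excluded_middle_informative (U (pi w))) as [_ | N]; [reflexivity |].
      exfalso; exact (N (Pd w Hw)).
    - assert (Vx : V (pi x)) by (destruct (Hcov _ (HS x)); tauto).
      destruct (open_path_near n V pi x Hc HV Vx) as [d [Hd Pd]].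
      exists d; split; [exact Hd |]; intros w Hw.
      destruct (excluded_middle_informative (U (pi w))) as [Uw | _]; [| reflexivity].
      exfalso; exact (Hdis _ (HS w) Uw (Pd w Hw)). }
  assert (Hcont : continuity h).
  { intros x eps He; destruct (Hloc x) as [d [Hd Pd]]; exists d; split; [exact Hd |].
    intros w [_ Hw]; simpl in *; unfold R_dist in *; rewrite Pd by exact Hw.
    unfold Rminus; rewrite Rplus_opp_r, Rabs_R0; exact He. }
  assert (ha : h a < 0)
    by (unfold h; destruct (excluded_middle_informative (U (pi a))); [lra | contradiction]).
  assert (hb : 0 < h b).
  { unfold h; destruct (excluded_middle_informative (U (pi b))) as [Ub |]; [| lra].
    exfalso; exact (Hdis _ (HS b) Ub Vb). }
  destruct (IVT h a b Hcont Hab ha hb) as [z [_ Hz]].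
  unfold h in Hz; destruct (excluded_middle_informative (U (pi z))); lra.
Qed.

Lemma open_saturated_proportional (n : nat) (U : Config -> Prop) (x X : Config) :
  cfg_open n U -> saturated n U -> U x -> proportional_on (fun i => (i < n)%nat) X x -> U X.
Proof.
  intros Ho Hs Ux [lam H].
  assert (Ul : U (fun i => vscale (lam i) (x i))) by (apply (Hs x lam); auto; apply H).
  destruct (Ho _ Ul) as [eps [He Pe]]; apply Pe; intros i Hi.
  destruct (H i Hi) as [_ ->]; unfold vclose, Cclose.
  unfold Rminus; rewrite !Rplus_opp_r, !Rabs_R0; repeat split; exact He.
Qed.

Lemma realization_space_connected (n : nat) (A : Config) :
  is_arrangement n A -> peelable n A -> ~ disconnected n (realization_space n (I_of A)).
Proof.
  intros HA Hpeel [U [V [HUo [HVo [HUs [HVs [Hcov [Hdisj [[x [Sx Ux]] [y [Sy Vy]]]]]]]]]]].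
  destruct (admissible_order_exists n A HA n (seq 0 n) Hpeel) as [ord [Hadm Hord]];
    [rewrite length_seq; lia | intros i Hi; apply in_seq in Hi; lia |].
  assert (HR : forall i, In i (map fst ord) <-> (i < n)%nat)
    by (intro i; rewrite Hord, in_seq; lia).
  assert (Hbuild : forall z, realization_space n (I_of A) z ->
            exists th, proportional_on (fun i => (i < n)%nat) (build ord th) z).
  { intros z Sz; destruct (build_realizes n A z HA Sz ord Hadm) as [th [lam Hlam]];
      [intros i; apply HR |].
    exists th, lam; intros i Hi; apply Hlam, HR, Hi. }
  destruct (Hbuild x Sx) as [thp Hp], (Hbuild y Sy) as [thq Hq].
  destruct (realization_path n A ord thp thq Hadm HR (generic_of_proportional n A x _ Sx Hp)
              (generic_of_proportional n A y _ Sy Hq)) as [pi [Spi [Hcont [E0 E1]]]].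
  apply (no_path_across_separation n _ U V pi 0 (PI / 2) PI2_RGT_0 HUo HVo Hcov Hdisj Spi Hcont).
  - rewrite E0; exact (open_saturated_proportional n U x _ HUo HUs Ux Hp).
  - rewrite E1; exact (open_saturated_proportional n V y _ HVo HVs Vy Hq).
Qed.

Theorem mainTheorem4 (n : nat) (A : Config) :
  is_arrangement n A ->
  disconnected n (realization_space n (I_of A)) ->
  exists J : nat -> Prop,
    (forall i, J i -> (i < n)%nat) /\ (exists i, J i) /\
    forall h, J h ->
      exists p1 p2 p3 : vec3,
        ~ same_point p1 p2 /\ ~ same_point p2 p3 /\ ~ same_point p1 p3 /\
        in_mult A J p1 /\ on_line p1 (A h) /\
        in_mult A J p2 /\ on_line p2 (A h) /\
        in_mult A J p3 /\ on_line p3 (A h).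
Proof.
  intros HA Hdis; apply NNPP; intro Hnone.
  apply (realization_space_connected n A HA); [| exact Hdis].
  intros J HJ HJne; apply NNPP; intro Hall; apply Hnone.
  exists J; split; [exact HJ | split; [exact HJne |]].
  intros h Jh; apply NNPP; intro Hh; apply Hall; exists h; split; assumption.
Qed.
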